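(* Let $D' \in \mathrm{Sym}_n(\mathbb{R}_{\geq 0})$ be a corrupted distance matrix. Then the Increase Only Metric Repair algorithm described below returns a perturbation $P$ with $0\preceq P$ such that $D'+P$ is metric, and it runs in time $O(n^3)$.
   Context: $\mathrm{Sym}_n(\mathbb{R}_{\geq 0})$ denotes the symmetric $n\times n$ matrices with nonnegative entries. $D$ is metric if $D_{ii}=0$ for all $i$ and $D_{ij}\le D_{ik}+D_{jk}$ for all $i,j,k$. $A\preceq B$ means entrywise $\le$. The Increase Only Metric Repair algorithm: set $\widehat{D}=D'$ (a symmetric matrix, updates being made symmetrically). For $k=1,\dots,n$, for $i=1,\dots,n$, for $j=1,\dots,i-1$: if $\widehat{D}_{ij} > \widehat{D}_{ik}+\widehat{D}_{kj}$, set $\widehat{D}_{ik}=\widehat{D}_{ki}=\widehat{D}_{ij}-\widehat{D}_{kj}$. Output $P=\widehat{D}-D'$. *)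

From mathcomp Require Import all_boot all_order all_algebra.
Set Implicit Arguments. Unset Strict Implicit. Unset Printing Implicit Defensive.
Import Order.TTheory GRing.Theory Num.Theory.
Local Open Scope ring_scope.

Section IOMR.
Variables (R : realFieldType) (n : nat).

Definition sym_nonneg (D : 'M[R]_n) : Prop :=
  (forall i j, D i j = D j i) /\ (forall i j, 0 <= D i j).

Definition is_metric (D : 'M[R]_n) : Prop :=
  (forall i, D i i = 0) /\ (forall i j k, D i j <= D i k + D j k).

Definition mx_le (A B : 'M[R]_n) : Prop := forall i j, A i j <= B i j.

Definition sym_set (D : 'M[R]_n) (i k : 'I_n) (v : R) : 'M[R]_n :=
  \matrix_(a, b) (if ((a == i) && (b == k)) || ((a == k) && (b == i))
                  then v else D a b).

Definition iomr_step (k i j : 'I_n) (D : 'M[R]_n) : 'M[R]_n :=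
  if D i k + D k j < D i j then sym_set D i k (D i j - D k j) else D.

(* The state carries the current matrix and a counter of elementary
   (constant-time) inner-loop iterations performed, as a cost model. *)
Definition iomr_state := ('M[R]_n * nat)%type.

Definition iomr_tick (k i j : 'I_n) (s : iomr_state) : iomr_state :=
  (iomr_step k i j s.1, s.2.+1).

Definition iomr_run (D' : 'M[R]_n) : iomr_state :=
  foldl (fun (s : iomr_state) (k : 'I_n) =>
    foldl (fun (s : iomr_state) (i : 'I_n) =>
      foldl (fun (s : iomr_state) (j : 'I_n) => iomr_tick k i j s) s
        [seq j <- enum 'I_n | (nat_of_ord j < nat_of_ord i)%N])
      s (enum 'I_n))
    (D', 0%N) (enum 'I_n).

Definition iomr (D' : 'M[R]_n) : 'M[R]_n := (iomr_run D').1 - D'.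

Definition iomr_cost (D' : 'M[R]_n) : nat := (iomr_run D').2.

End IOMR.

From mathcomp Require Import all_boot all_order all_algebra.
From mathcomp Require Import lra.
Set Implicit Arguments. Unset Strict Implicit. Unset Printing Implicit Defensive.
Import Order.TTheory GRing.Theory Num.Theory.
Local Open Scope ring_scope.

(* Round k only raises the entries D(i,k) = D(k,i), row by row.  When row i
   is treated the rows j < i are final, and step (i,j) leaves
   D(i,j) <= D(i,k) + D(k,j); since D(i,k) only grows afterwards, the
   triangle inequality through k holds at the end of the round.  A raised
   entry satisfies D(i,k) + D(j,k) <= D(i,j) for some j < i, so, using the
   triangle inequality through k for (m,j),
   D(i,k) <= D(i,m) + D(m,j) - D(j,k) <= D(i,m) + D(m,k):
   triangle inequalities through any other m that held before the round
   survive it.  After the n rounds D' + P is therefore metric, and P >= 0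
   since entries only grow.  Each round performs at most n^2 steps. *)

Lemma foldl_filter (S T : Type) (f : S -> T -> S) (p : pred T) s l :
  foldl f s [seq x <- l | p x] = foldl (fun s x => if p x then f s x else s) s l.
Proof. by elim: l s => //= x l IH s; case: (p x) => /=. Qed.

Lemma foldl_enum_ord_ind (S : Type) (n : nat) (f : S -> 'I_n -> S)
    (P : nat -> S -> Prop) s :
  P 0%N s -> (forall (i : 'I_n) s, P i s -> P i.+1 (f s i)) ->
  P n (foldl f s (enum 'I_n)).
Proof.
move=> P0 Pf.
suff Pm m : (m <= n)%N -> P m (foldl f s (take m (enum 'I_n))).
  by have := Pm n (leqnn n); rewrite take_oversize // size_enum_ord.
elim: m => [_|m IH lt_mn]; first by rewrite take0.
rewrite (take_nth (Ordinal lt_mn)) ?size_enum_ord // foldl_rcons.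
have -> : nth (Ordinal lt_mn) (enum 'I_n) m = Ordinal lt_mn.
  by apply: val_inj; rewrite /= nth_enum_ord.
exact: (Pf (Ordinal lt_mn)) (IH (ltnW lt_mn)).
Qed.

Lemma foldl_snd_le (S T : Type) (f : S * nat -> T -> S * nat) b s l :
  (forall s x, ((f s x).2 <= s.2 + b)%N) ->
  ((foldl f s l).2 <= s.2 + size l * b)%N.
Proof.
move=> fb; elim: l s => [|x l IH] s /=; first by rewrite addn0.
by apply: leq_trans (IH _) _; rewrite mulSn addnA leq_add2r.
Qed.

Section IncreaseOnlyMetricRepair.
Variables (R : realFieldType) (n : nat).
Implicit Types (M D : 'M[R]_n) (s : iomr_state R n).

Definition iomr_row (k i : 'I_n) s : iomr_state R n :=
  foldl (fun s j => iomr_tick k i j s) s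
    [seq j <- enum 'I_n | (nat_of_ord j < nat_of_ord i)%N].

Definition iomr_round (k : 'I_n) s : iomr_state R n :=
  foldl (fun s i => iomr_row k i s) s (enum 'I_n).

Lemma iomr_runE D : iomr_run D = foldl (fun s k => iomr_round k s) (D, 0%N) (enum 'I_n).
Proof. by []. Qed.

Lemma iomr_row_cost k i s : ((iomr_row k i s).2 <= s.2 + n)%N.
Proof.
rewrite /iomr_row; apply: leq_trans; first apply: (foldl_snd_le (b := 1)) => t j; first by rewrite addn1.
by rewrite muln1 leq_add2l size_filter -[leqRHS]size_enum_ord count_size.
Qed.

Lemma iomr_round_cost k s : ((iomr_round k s).2 <= s.2 + n * n)%N.
Proof.
rewrite /iomr_round; apply: leq_trans; first by apply: (foldl_snd_le (b := n)) => t i; apply: iomr_row_cost.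
by rewrite size_enum_ord.
Qed.

Lemma iomr_cost_le D : (iomr_cost D <= n ^ 3)%N.
Proof.
rewrite /iomr_cost iomr_runE.
apply: leq_trans; first by apply: (foldl_snd_le (b := n * n)) => t k; apply: iomr_round_cost.
by rewrite size_enum_ord add0n !expnS expn0 muln1.
Qed.


Definition dissimilarity M := sym_nonneg M /\ forall i, M i i = 0.

Definition triangle_at M (m : 'I_n) := forall i j, M i j <= M i m + M m j.

Section SymSet.
Variables (M : 'M[R]_n) (i k : 'I_n) (v : R).

Lemma sym_set_sym : (forall a b, M a b = M b a) ->
  forall a b, sym_set M i k v a b = sym_set M i k v b a.
Proof.
move=> Ms a b; rewrite !mxE [(b == i) && _]andbC [(b == k) && _]andbC orbC.
by case: ifP.
Qed.

Lemma sym_set_diag a : i != k -> sym_set M i k v a a = M a a.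
Proof.
move=> ik; rewrite mxE; case: ifP => // /orP[]/andP[/eqP E1 /eqP E2];
  by move: ik; rewrite -E1 -E2 eqxx.
Qed.

Lemma sym_set_ik : sym_set M i k v i k = v.
Proof. by rewrite mxE !eqxx. Qed.

Lemma sym_set_ne_i a b : a != i -> b != i -> sym_set M i k v a b = M a b.
Proof. by move=> ai bi; rewrite mxE (negbTE ai) (negbTE bi) andbF. Qed.

Lemma sym_set_ne_k a b : a != k -> b != k -> sym_set M i k v a b = M a b.
Proof. by move=> ak bk; rewrite mxE (negbTE ak) (negbTE bk) andbF. Qed.

Lemma le_sym_set a b : M i k <= v -> M k i <= v -> M a b <= sym_set M i k v a b.
Proof. by move=> Mik Mki; rewrite mxE; case: ifP => // /orP[]/andP[/eqP-> /eqP->]. Qed.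

End SymSet.

Variant iomr_step_spec (k r j : 'I_n) M : 'M[R]_n -> Prop :=
  | IomrStepKeep of M r j <= M r k + M k j : iomr_step_spec k r j M M
  | IomrStepRaise of M r k + M k j < M r j :
      iomr_step_spec k r j M (sym_set M r k (M r j - M k j)).

Lemma iomr_stepP k r j M : iomr_step_spec k r j M (iomr_step k r j M).
Proof. by rewrite /iomr_step; case: ltP; constructor. Qed.

Section Round.
Variables (k : 'I_n) (D : 'M[R]_n).
Hypothesis D_dissimilarity : dissimilarity D.

(* State of round [k] once the rows [i < r] have been treated, and in row [r]
   the columns [j < c]; the matrix [D] is the one the round started from. *)
Record round_inv (r c : nat) M : Prop := RoundInv {
  round_sym : forall a b, M a b = M b a;
  round_diag : forall a, M a a = 0;
  round_ge : forall a b, D a b <= M a b;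
  round_off : forall a b, a != k -> b != k -> M a b = D a b;
  round_raised : forall i : 'I_n, M i k = D i k \/
    (i <= r)%N /\ exists2 j : 'I_n, (j < i)%N /\ j != k & M i k + M j k <= M i j;
  round_tri : forall a b : 'I_n, (b < a)%N ->
    (a < r)%N || (a == r :> nat) && (b < c)%N -> M a b <= M a k + M b k }.

Lemma round_inv_init : round_inv 0 0 D.
Proof.
have [[Ds _] Dd] := D_dissimilarity.
by split=> // [i|a b _]; [left | rewrite andbF].
Qed.

Lemma round_inv_next_col (r : 'I_n) c M : round_inv r c M ->
  (forall b : 'I_n, (b < r)%N -> b = c :> nat -> M r b <= M r k + M b k) ->
  round_inv r c.+1 M.
Proof.
case=> Ms Md MD Moff Mraised Mtri new_pair; split=> // a b ba /orP[ar|].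
  by apply: Mtri => //; rewrite ar.
case/andP=> /eqP ar; rewrite ltnS leq_eqVlt => /orP[/eqP bc|bc].
  by rewrite (val_inj ar); apply: new_pair => //; rewrite -ar.
by apply: Mtri => //; rewrite ar eqxx bc orbT.
Qed.

Lemma round_inv_next_row r M : round_inv r n M -> round_inv r.+1 0 M.
Proof.
case=> Ms Md MD Moff Mraised Mtri; split=> //.
  by move=> i; case: (Mraised i) => [|[ir wit]]; [left | right; split=> //; apply: leqW].
move=> a b ba; rewrite ltnS ltn0 andbF orbF leq_eqVlt => /orP[ar|ar].
  by apply: Mtri => //; rewrite ar ltn_ord orbT.
by apply: Mtri => //; rewrite ar.
Qed.

Lemma round_inv_raise (r : 'I_n) c M v : round_inv r c M -> r != k ->
  M r k <= v -> (exists2 j : 'I_n, (j < r)%N /\ j != k & v + M j k <= M r j) ->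
  round_inv r c (sym_set M r k v).
Proof.
case=> Ms Md MD Moff Mraised Mtri rk Mv wit.
set M' := sym_set M r k v.
have kr : k != r by rewrite eq_sym.
have MM' a b : M a b <= M' a b by apply: le_sym_set; rewrite // Ms.
have M'_sym a b : M' a b = M' b a by apply: sym_set_sym.
have M'_diag a : M' a a = 0 by rewrite sym_set_diag.
split=> //.
- by move=> a b; apply: le_trans (MD a b) (MM' a b).
- by move=> a b ak bk; rewrite sym_set_ne_k // Moff.
- move=> i; case: (eqVneq i r) => [-> | ir].
    right; split=> //; case: wit => j [jr jk] vj; exists j => //.
    have jr' : j != r by rewrite neq_ltn jr.
    by rewrite sym_set_ik sym_set_ne_i // sym_set_ne_k.
  rewrite sym_set_ne_i //; case: (Mraised i) => [|[ile [j [ji jk] Mj]]]; first by left.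
  have jr : j != r by rewrite neq_ltn (leq_trans ji ile).
  by right; split=> //; exists j => //; rewrite !sym_set_ne_i.
- move=> a b ba ab_done.
  case: (eqVneq a k) => [-> | ak]; first by rewrite M'_diag add0r M'_sym.
  case: (eqVneq b k) => [-> | bk]; first by rewrite M'_diag addr0.
  rewrite sym_set_ne_k //; apply: le_trans (Mtri a b ba ab_done) _.
  by apply: lerD.
Qed.

Lemma round_inv_step (r j : 'I_n) M : round_inv r j M -> (j < r)%N ->
  round_inv r j.+1 (iomr_step k r j M).
Proof.
move=> inv jr; have [Ms Md _ _ _ _] := inv.
case: iomr_stepP => [keep | raise].
  by apply: round_inv_next_col => // b _ /val_inj ->; rewrite (Ms j k).
have rk : r != k by apply: contraTneq raise => ->; rewrite Md add0r ltxx.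
have jk : j != k by apply: contraTneq raise => ->; rewrite Md addr0 ltxx.
have jr' : j != r by rewrite neq_ltn jr.
have kr : k != r by rewrite eq_sym.
apply: round_inv_next_col.
  apply: round_inv_raise => //; first by rewrite lerBrDr ltW.
  by exists j => //; rewrite (Ms j k) subrK.
move=> b _ /val_inj ->.
by rewrite sym_set_ne_k // sym_set_ik sym_set_ne_i // (Ms j k) subrK.
Qed.

Lemma round_inv_past (r : 'I_n) c M : round_inv r c M -> (r <= c)%N ->
  round_inv r c.+1 M.
Proof.
by move=> inv rc; apply: round_inv_next_col => // b br bc; rewrite bc ltnNge rc in br.
Qed.

Lemma iomr_round_inv s : s.1 = D -> round_inv n 0 (iomr_round k s).1.
Proof.
move=> sD; apply: (foldl_enum_ord_ind (P := fun r t => round_inv r 0 t.1)).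
  by rewrite sD; exact: round_inv_init.
move=> r t inv; apply: round_inv_next_row; rewrite /iomr_row foldl_filter.
apply: (foldl_enum_ord_ind (P := fun c t => round_inv r c t.1)) => // j u.
by case: ltnP => [jr | rj] inv'; [apply: round_inv_step | apply: round_inv_past].
Qed.

Lemma round_inv_dissimilarity M : round_inv n 0 M -> dissimilarity M.
Proof.
case=> Ms Md MD _ _ _; have [[_ Dn] _] := D_dissimilarity.
by split=> //; split=> // a b; apply: le_trans (Dn a b) (MD a b).
Qed.

Lemma round_inv_pivot M : round_inv n 0 M -> forall a b, M a b <= M a k + M b k.
Proof.
move=> inv a b; have [[Ms Mn] Md] := round_inv_dissimilarity inv.
case: (ltngtP a b) => ab.
- by rewrite Ms addrC; apply: (round_tri inv) => //; rewrite ltn_ord.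
- by apply: (round_tri inv) => //; rewrite ltn_ord.
- by rewrite (val_inj ab) Md addr_ge0.
Qed.

Lemma round_inv_triangle_pivot M : round_inv n 0 M -> triangle_at M k.
Proof. by move=> inv i j; rewrite -(round_sym inv j k); apply: round_inv_pivot. Qed.

Lemma round_inv_triangle M m : round_inv n 0 M -> m != k ->
  triangle_at D m -> triangle_at M m.
Proof.
move=> inv mk Dm; have [[Ms Mn] Md] := round_inv_dissimilarity inv.
have pivot := round_inv_pivot inv; case: inv => _ _ MD Moff Mraised _.
have col_k i : i != k -> M i k <= M i m + M m k.
  move=> ik; rewrite (Moff i m ik mk).
  case: (Mraised i) => [-> | [_ [j [_ jk] Mj]]].
    by apply: le_trans (Dm i k) _; rewrite lerD2l.
  rewrite (Moff i j ik jk) in Mj; have := Dm i j; have := pivot m j.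
  rewrite (Moff m j mk jk); lra.
move=> i j; case: (eqVneq i k) => [-> | ik]; case: (eqVneq j k) => [-> | jk].
- by rewrite Md addr_ge0.
- by rewrite (Ms k j) (Ms k m) (Ms m j) addrC; apply: col_k.
- exact: col_k.
- by rewrite (Moff i j) // (Moff i m) // (Moff m j) //; apply: Dm.
Qed.

End Round.

Lemma iomr_round_spec k s : dissimilarity s.1 ->
  [/\ dissimilarity (iomr_round k s).1, mx_le s.1 (iomr_round k s).1,
      triangle_at (iomr_round k s).1 k &
      forall m, m != k -> triangle_at s.1 m -> triangle_at (iomr_round k s).1 m].
Proof.
move=> s_dis; have inv := iomr_round_inv k s_dis (erefl s.1).
split; [exact: round_inv_dissimilarity inv | exact: round_ge inv |
        exact: round_inv_triangle_pivot inv | by move=> m; apply: round_inv_triangle].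
Qed.

Lemma iomr_run_spec D : dissimilarity D ->
  [/\ dissimilarity (iomr_run D).1, mx_le D (iomr_run D).1 &
      forall m, triangle_at (iomr_run D).1 m].
Proof.
move=> D_dis; rewrite iomr_runE.
set P := fun (k : nat) (t : iomr_state R n) => [/\ dissimilarity t.1, mx_le D t.1 &
  forall m : 'I_n, (m < k)%N -> triangle_at t.1 m].
suff [M_dis DM Mtri] : P n (foldl (fun s k => iomr_round k s) (D, 0%N) (enum 'I_n)).
  by split=> // m; apply: Mtri.
apply: foldl_enum_ord_ind => [|k t [t_dis Dt t_tri]]; first by split=> // a b.
have [M_dis tM Mk Mm] := iomr_round_spec k t_dis.
split=> // [a b | m]; first exact: le_trans (Dt a b) (tM a b).
rewrite ltnS leq_eqVlt => /orP[/eqP/val_inj -> // | mk].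
by apply: Mm (t_tri m mk); rewrite neq_ltn mk.
Qed.

End IncreaseOnlyMetricRepair.

Theorem mainTheorem4 :
  (exists c : nat, forall (R : realFieldType) (n : nat) (D' : 'M[R]_n),
      (iomr_cost D' <= c * n ^ 3)%N) /\
  (forall (R : realFieldType) (n : nat) (D' : 'M[R]_n),
    sym_nonneg D' ->
    (forall i, D' i i = 0) ->
    mx_le 0 (iomr D') /\ is_metric (D' + iomr D')).
Proof.
split; first by exists 1%N => R n D'; rewrite mul1n; apply: iomr_cost_le.
move=> R n D' D'_sym_nonneg D'_diag.
have [[[Ms _] Md] D'M Mtri] := iomr_run_spec (conj D'_sym_nonneg D'_diag).
have -> : D' + iomr D' = (iomr_run D').1 by rewrite /iomr addrC subrK.
split; first by move=> i j; rewrite /iomr !mxE subr_ge0.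
by split=> // i j k; rewrite (Ms j k); apply: Mtri.
Qed.
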